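(* Let $Q=\Diamond abcd$ be a convex quadrilateral with vertices $a,b,c,d$ in clockwise order, such that the diagonal $\overline{ac}$ is horizontal, $|ac|=1$, and $1$ is the diameter of $Q$. Let $\Box efgh$ be the smallest axis-parallel rectangle containing $Q$, with horizontal side length $1$ and vertical side length $W$, where $\frac{2}{\sqrt5}<W\le 1$; $a$ lies on its left side $\overline{gh}$, $b$ on its top side $\overline{he}$, $c$ on its right side $\overline{ef}$ and $d$ on its bottom side $\overline{fg}$. Assume that $\overline{ac}$ lies on or below the horizontal line through the midpoints of the left and right sides, and that $b$ lies to the right of the midpoint of the top side. Let $m_1$ be the midpoint of $\overline{ab}$ and let $z$ be the point where the perpendicular bisector of $\overline{ab}$, starting at $m_1$ and going into $Q$, meets the boundary of $Q$. If $z$ lies on the edge $\overline{cd}$, then $|m_1z|\ge \frac W2$. *)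

From mathcomp Require Import all_boot all_order all_algebra.
Set Implicit Arguments. Unset Strict Implicit. Unset Printing Implicit Defensive.
Import Order.TTheory GRing.Theory Num.Theory.
Local Open Scope ring_scope.

Definition pt (R : rcfType) := (R * R)%type.

Definition px {R : rcfType} (p : pt R) : R := p.1.
Definition py {R : rcfType} (p : pt R) : R := p.2.

Definition dist {R : rcfType} (p q : pt R) : R :=
  Num.sqrt ((px p - px q) ^+ 2 + (py p - py q) ^+ 2).

(* cross product of (q - p) and (r - q): negative iff p -> q -> r turns right
   (clockwise). *)
Definition turn {R : rcfType} (p q r : pt R) : R :=
  (px q - px p) * (py r - py q) - (py q - py p) * (px r - px q).

Definition convex_quad_cw {R : rcfType} (a b c d : pt R) : Prop :=
  [/\ turn a b c < 0, turn b c d < 0, turn c d a < 0 & turn d a b < 0].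

Definition in_quad {R : rcfType} (a b c d p : pt R) : Prop :=
  exists la lb lc ld : R,
    [/\ 0 <= la, 0 <= lb, 0 <= lc & 0 <= ld] /\
    [/\ la + lb + lc + ld = 1,
        px p = la * px a + lb * px b + lc * px c + ld * px d
      & py p = la * py a + lb * py b + lc * py c + ld * py d].

Definition diameter_is {R : rcfType} (a b c d : pt R) (D : R) : Prop :=
  (forall p q, in_quad a b c d p -> in_quad a b c d q -> dist p q <= D) /\
  (exists p q, [/\ in_quad a b c d p, in_quad a b c d q & dist p q = D]).

Definition on_segment {R : rcfType} (u v p : pt R) : Prop :=
  exists t : R, [/\ 0 <= t, t <= 1,
    px p = px u + t * (px v - px u) & py p = py u + t * (py v - py u)].

Definition midpoint {R : rcfType} (p q : pt R) : pt R :=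
  ((px p + px q) / 2, (py p + py q) / 2).

From mathcomp Require Import all_boot all_order all_algebra.
From mathcomp Require Import ring lra.
Set Implicit Arguments. Unset Strict Implicit. Unset Printing Implicit Defensive.
Import Order.TTheory GRing.Theory Num.Theory.
Local Open Scope ring_scope.

(* After translating, a = (0, h), b = (p, W), c = (1, h) and d = (q, 0) with
   0 <= h <= W/2.  In fact W/2 is at most the distance from m1 to the whole
   line cd, i.e. |turn c d m1| / |cd|, so the direction of the ray is irrelevant.
   Here turn c d m1 = -((1-q) W + h (1-p+q)) / 2 and |cd|^2 = (1-q)^2 + h^2, and
   the resulting polynomial inequality follows from |bd| <= 1, which forces
   p - q < 2/3 because W^2 > 4/5. *)

Section Plane.

Context {R : rcfType}.
Implicit Types (p q r c d m z : pt R).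

Lemma sqr_dist p q : dist p q ^+ 2 = (px p - px q) ^+ 2 + (py p - py q) ^+ 2.
Proof. by rewrite sqr_sqrtr // addr_ge0 ?sqr_ge0. Qed.

Lemma px_midpoint p q : px (midpoint p q) = (px p + px q) / 2.
Proof. by []. Qed.

Lemma py_midpoint p q : py (midpoint p q) = (py p + py q) / 2.
Proof. by []. Qed.

Lemma turn_rot p q r : turn p q r = turn q r p.
Proof. by rewrite /turn; ring. Qed.

(* Lagrange's identity |u|^2 |v|^2 = (u x v)^2 + (u . v)^2 for u = d - c and
   v = m - z, using (d - c) x (z - d) = 0. *)
Lemma sqr_turn_le_dist_line c d m z (t : R) :
  px z = px c + t * (px d - px c) -> py z = py c + t * (py d - py c) ->
  turn c d m ^+ 2 <= dist c d ^+ 2 * dist m z ^+ 2.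
Proof.
move=> zx zy.
have -> : dist c d ^+ 2 * dist m z ^+ 2 = turn c d m ^+ 2 +
    ((px d - px c) * (px m - px z) + (py d - py c) * (py m - py z)) ^+ 2.
  by rewrite !sqr_dist /turn zx zy; ring.
by rewrite lerDl sqr_ge0.
Qed.

Lemma dist_gt0_of_turn p q r : turn p q r != 0 -> 0 < dist q r.
Proof.
move=> turn_neq0; rewrite lt_def sqrtr_ge0 andbT.
apply: contra turn_neq0 => /eqP qr0.
have := @sqr_turn_le_dist_line q r p r 1.
rewrite -turn_rot qr0 expr0n mul0r le_eqVlt ltNge sqr_ge0 orbF sqrf_eq0.
by apply; ring.
Qed.

Lemma diameter_dist_bd a b c d (D : R) : diameter_is a b c d D -> dist b d <= D.
Proof.
case=> diamP _; apply: diamP.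
- by exists 0, 1, 0, 0; split; [split; lra | split; ring].
- by exists 0, 0, 0, 1; split; [split; lra | split; ring].
Qed.

End Plane.

Lemma one_le_sqr_add_4mul (R : realFieldType) (k s : R) :
  1 / 3 <= k -> 0 <= s -> 1 - k <= s -> 1 <= k ^+ 2 + 4 * k * s.
Proof.
move=> k_ge s_ge0 s_ge.
have ks_ge : 0 <= k * (s - (1 - k)) by apply: mulr_ge0; lra.
case: (lerP k 1) => k1; last nra.
have : 0 <= (3 * k - 1) * (1 - k) by apply: mulr_ge0; lra.
nra.
Qed.

Lemma sqr_width_le_cross (R : realFieldType) (h W p q : R) :
  0 <= h -> 2 * h <= W -> W <= 1 -> p <= 1 -> q <= 1 ->
  (p - q) ^+ 2 + W ^+ 2 <= 1 -> 5 / 9 < W ^+ 2 ->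
  W ^+ 2 * ((1 - q) ^+ 2 + h ^+ 2) <= ((1 - q) * W + h * (1 - p + q)) ^+ 2.
Proof.
move=> h_ge0 hW W1 p1 q1 bd W2.
set k := 1 - p + q; set s := 1 - q.
have k_ge : 1 / 3 <= k.
  rewrite /k; case: (lerP (p - q) (2 / 3)) => pq; first lra.
  have : 4 / 9 < (p - q) ^+ 2 by nra.
  lra.
have ks_ge0 : 0 <= k * s by apply: mulr_ge0; rewrite /s; lra.
have kks : 1 <= k ^+ 2 + 4 * k * s.
  by apply: one_le_sqr_add_4mul => //; rewrite /s /k; lra.
have diffE : ((1 - q) * W + h * k) ^+ 2 - W ^+ 2 * (s ^+ 2 + h ^+ 2) =
    h * (h * (k ^+ 2 + 4 * k * s - W ^+ 2) + 2 * k * s * (W - 2 * h)).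
  by rewrite /s; ring.
rewrite -subr_ge0 diffE; apply: mulr_ge0 => //.
by apply: addr_ge0; [apply: mulr_ge0 => //; nra | apply: mulr_ge0; lra].
Qed.

Theorem lemma6 (R : rcfType) (a b c d : pt R) (x0 y0 W : R) :
  convex_quad_cw a b c d ->
  py a = py c ->
  dist a c = 1 ->
  diameter_is a b c d 1 ->
  2 / Num.sqrt 5 < W -> W <= 1 ->
  (* a on left side gh, b on top side he, c on right side ef, d on bottom fg *)
  px a = x0 -> y0 <= py a <= y0 + W ->
  py b = y0 + W -> x0 <= px b <= x0 + 1 ->
  px c = x0 + 1 -> y0 <= py c <= y0 + W ->
  py d = y0 -> x0 <= px d <= x0 + 1 ->
  (* ac on or below the line through the midpoints of the left/right sides *)
  py a <= y0 + W / 2 ->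
  (* b to the right of the midpoint of the top side *)
  x0 + 1 / 2 < px b ->
  forall z : pt R,
    (exists t : R, 0 < t /\
       z = (px (midpoint a b) + t * (py b - py a),
            py (midpoint a b) - t * (px b - px a))) ->
    on_segment c d z ->
    W / 2 <= dist (midpoint a b) z.
Proof.
move=> [_ bcd_cw _ _] ac_y _ diam W_gt W1 ax /andP[ya_ge _] yb /andP[_ xb1] cx _
  yd /andP[_ xd1] ya_mid _ z _ [t [_ _ zx zy]].
set h := py a - y0; set p := px b - x0; set q := px d - x0.
have bd : (p - q) ^+ 2 + W ^+ 2 <= 1.
  have bd1 := diameter_dist_bd diam.
  have : dist b d ^+ 2 <= 1 by rewrite -(expr1n _ 2) ler_sqr ?nnegrE ?sqrtr_ge0.
  by rewrite sqr_dist yb yd /p /q; congr (_ <= _); ring.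
have W2 : 5 / 9 < W ^+ 2.
  have sqrt5_gt0 : 0 < Num.sqrt (5 : R) by rewrite sqrtr_gt0; lra.
  have sqrt5_sqr : Num.sqrt (5 : R) ^+ 2 = 5 by rewrite sqr_sqrtr //; lra.
  have : 2 < W * Num.sqrt 5 by rewrite -ltr_pdivrMr.
  nra.
set N := (1 - q) * W + h * (1 - p + q).
have cross_ge : W ^+ 2 * ((1 - q) ^+ 2 + h ^+ 2) <= N ^+ 2.
  by apply: sqr_width_le_cross => //; rewrite /h /p /q; lra.
have turnE : turn c d (midpoint a b) = - N / 2.
  by rewrite /turn px_midpoint py_midpoint cx yd yb ax -ac_y /N /p /q /h; field.
have cdE : dist c d ^+ 2 = (1 - q) ^+ 2 + h ^+ 2.
  by rewrite sqr_dist cx yd -ac_y /q /h; ring.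
have cd_gt0 : 0 < dist c d ^+ 2.
  by rewrite exprn_gt0 // (dist_gt0_of_turn (ltr0_neq0 bcd_cw)).
have line := sqr_turn_le_dist_line (midpoint a b) zx zy.
rewrite -ler_sqr ?nnegrE ?sqrtr_ge0 //; last lra.
rewrite -(ler_pM2l cd_gt0); apply: le_trans line; rewrite turnE cdE.
have -> : ((1 - q) ^+ 2 + h ^+ 2) * (W / 2) ^+ 2 =
  W ^+ 2 * ((1 - q) ^+ 2 + h ^+ 2) / 4 by field.
have -> : (- N / 2) ^+ 2 = N ^+ 2 / 4 by field.
by rewrite ler_pM2r ?invr_gt0.
Qed.
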